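(* Let $K \ge 2$ be an integer, let $k \in \{1,\dots,K-1\}$, let $\mathbf{x}_0 = \mathbf{e}_k \in \{0,1\}^K$ be the $k$-th standard basis vector, and let $\mathbf{e}_K$ denote the $K$-th standard basis vector (the mask state). Let $\boldsymbol{\epsilon} = (\epsilon_1,\dots,\epsilon_K) \sim \mathcal{N}(\mathbf{0}, \mathbf{I}_K)$, let $Y = \max_{j \ne k} \epsilon_j - \epsilon_k$, and let $F_Y$ be the cumulative distribution function of $Y$. For real numbers $\tilde{\alpha}$ and $\tilde{\sigma} > 0$ with $\tilde{\alpha}^2 + \tilde{\sigma}^2 = 1$, define $\mathbf{w} = \tilde{\alpha}\mathbf{x}_0 + \tilde{\sigma}\boldsymbol{\epsilon}$ and $$\mathbf{z} = \begin{cases} \mathbf{x}_0 & \text{if } \mathbf{w}^{(k)} > \max_{j\neq k} \mathbf{w}^{(j)},\\ \mathbf{e}_K & \text{otherwise.}\end{cases}$$ Then for every $\gamma \in (0,1)$ there exist $\tilde{\alpha} \in \mathbb{R}$ and $\tilde{\sigma} > 0$ with $\tilde{\alpha}^2 + \tilde{\sigma}^2 = 1$, namely any such pair with $\tilde{\alpha}/\tilde{\sigma} = F_Y^{-1}(\gamma)$, for which $P(\mathbf{z} = \mathbf{x}_0) = \gamma$.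
   Context: This models one token of a masked discrete diffusion as the projection of a variance-preserving Gaussian latent: the discrete state keeps the ground-truth token $\mathbf{x}_0$ exactly when the ground-truth coordinate of the latent strictly exceeds all other coordinates, and otherwise collapses to the mask vector $\mathbf{e}_K$. Here $F_Y^{-1}$ denotes the inverse of $F_Y$ viewed as a map from $\mathbb{R}$ onto $(0,1)$. *)

From HB Require Import structures.
From mathcomp Require Import all_boot all_order all_algebra.
From mathcomp Require Import all_classical all_reals all_analysis.
Set Implicit Arguments. Unset Strict Implicit. Unset Printing Implicit Defensive.
Import Order.TTheory GRing.Theory Num.Theory.
Import numFieldNormedType.Exports.
Local Open Scope classical_set_scope.
Local Open Scope ring_scope.

(* Standard basis vector e_j of R^K, with 0-based index j (paper's e_{j+1}). *)
Definition stdbasis (R : realType) (K : nat) (j : nat) : 'cV[R]_K :=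
  \col_(i < K) ((nat_of_ord i == j)%:R).

(* The default value of the big max is some v j0 with j0 <> k,
   which does not change the maximum by idempotency. *)
Definition max_off (R : realType) (K : nat) (k : 'I_K) (v : 'I_K -> R) : R :=
  match [pick j | j != k] with
  | Some j0 => \big[Num.max/v j0]_(j | j != k) v j
  | None => 0
  end.

Definition mutually_independent d (T : measurableType d) (R : realType)
  (P : probability T R) (K : nat) (X : 'I_K -> {RV P >-> R}) : Prop :=
  forall B : 'I_K -> set R, (forall j, measurable (B j)) ->
    P [set w | forall j, B j (X j w)] = (\prod_(j < K) P (X j @^-1` B j))%E.

Definition std_gaussian_vector d (T : measurableType d) (R : realType)
  (P : probability T R) (K : nat) (eps : 'I_K -> {RV P >-> R}) : Prop :=
  mutually_independent eps /\
  (forall j (B : set R), measurable B ->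
     distribution P (eps j) B = normal_prob 0 1 B).

Definition Yvar d (T : measurableType d) (R : realType) (P : probability T R)
  (K : nat) (k : 'I_K) (eps : 'I_K -> {RV P >-> R}) (w : T) : R :=
  max_off k (fun j => eps j w) - eps k w.

Definition cdfY d (T : measurableType d) (R : realType) (P : probability T R)
  (K : nat) (k : 'I_K) (eps : 'I_K -> {RV P >-> R}) (t : R) : R :=
  fine (P [set w | Yvar k eps w <= t]).

Definition wvec d (T : measurableType d) (R : realType) (P : probability T R)
  (K : nat) (k : 'I_K) (eps : 'I_K -> {RV P >-> R}) (a s : R) (w : T)
  : 'cV[R]_K :=
  a *: stdbasis R K k + s *: \col_(i < K) eps i w.

Definition zvec d (T : measurableType d) (R : realType) (P : probability T R)
  (K : nat) (k : 'I_K) (eps : 'I_K -> {RV P >-> R}) (a s : R) (w : T)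
  : 'cV[R]_K :=
  let W := wvec k eps a s w in
  if max_off k (fun j => W j 0) < W k 0 then stdbasis R K k
  else stdbasis R K K.-1.

From HB Require Import structures.
From mathcomp Require Import all_boot all_order all_algebra.
From mathcomp Require Import all_classical all_reals all_analysis.
From mathcomp Require Import measurable_realfun lra.
Set Implicit Arguments.
Unset Strict Implicit.
Unset Printing Implicit Defensive.
Import Order.TTheory GRing.Theory Num.Theory.
Import numFieldNormedType.Exports.
Local Open Scope classical_set_scope.
Local Open Scope ring_scope.

(* The mask is avoided exactly when [Y < a / s], so the whole statement is about
   the law of [Y = max_(j <> k) eps_j - eps_k].  If [Y] lies in [c, c + h] then
   so does some [eps_j - eps_k], and a difference of independent variables, one
   of which has density at most [1], falls in an interval of length [h] with
   probability at most [4 h]; hence [F_Y] is [4 K]-Lipschitz, [P (Y < t) = F_Y t],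
   and [F_Y] is continuous.  It is strictly increasing because every open box has
   positive Gaussian mass, and it runs from [0] to [1]; so [F_Y t = gamma] has a
   unique solution [t], and [(a, s) = (t, 1) / sqrt (1 + t ^ 2)] realises it. *)

Section standard_normal.
Variable R : realType.

Lemma normal_peak1_le1 : normal_peak (1 : R) <= 1.
Proof.
rewrite /normal_peak expr1n mul1r invf_le1 ?sqrtr_gt0; last first.
  by rewrite mulrn_wgt0 ?pi_gt0.
by rewrite -sqrtr1 ler_sqrt ?mulr2n; have := pi_ge2 R; lra.
Qed.

Lemma normal_prob1_itv_le (m a b : R) : a <= b ->
  (normal_prob m 1 `[a, b] <= (b - a)%:E)%E.
Proof.
move=> ab; rewrite /normal_prob.
apply: (@le_trans _ _ (\int[lebesgue_measure]_(x in `[a, b]) (cst 1%:E x))%E).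
  apply: ge0_le_integral => //=.
  - by move=> x _; rewrite lee_fin normal_pdf_ge0.
  - by apply/measurable_EFinP/measurable_funTS; exact: measurable_normal_pdf.
  - move=> x _; rewrite lee_fin; apply: le_trans normal_peak1_le1.
    by apply: normal_pdf_ub; rewrite oner_neq0.
rewrite integral_cst //= mul1e lebesgue_measure_itv /= lte_fin.
by case: ltP => //; rewrite lee_fin subr_ge0.
Qed.

Lemma normal_prob01_itv_gt0 (a b : R) : a < b -> (0 < normal_prob 0 1 `]a, b[)%E.
Proof.
move=> ab; rewrite /normal_prob.
set c := normal_peak (1 : R) * expR (- (a ^+ 2 + b ^+ 2)).
have c0 : 0 < c by rewrite mulr_gt0 ?expR_gt0 // normal_peak_gt0 // oner_neq0.
apply: (@lt_le_trans _ _ (\int[lebesgue_measure]_(x in `]a, b[) (cst c%:E x))%E).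
  rewrite integral_cst //= lebesgue_measure_itv /= lte_fin ab -EFinD -EFinM.
  by rewrite lte_fin mulr_gt0 // subr_gt0.
apply: ge0_le_integral => //=.
- by move=> x _; rewrite lee_fin ltW.
- by apply/measurable_EFinP/measurable_funTS; exact: measurable_normal_pdf.
move=> x; rewrite in_itv /= => /andP[ax xb].
rewrite lee_fin /normal_pdf oner_eq0 /c ler_pM2l ?normal_peak_gt0 ?oner_neq0 //.
rewrite /normal_fun ler_expR subr0 expr1n.
have : x ^+ 2 <= a ^+ 2 + b ^+ 2 by have [x0|x0] := leP 0 x; nra.
have := sqr_ge0 x; lra.
Qed.

End standard_normal.

Lemma measurableT_preimage d d' (T : measurableType d) (U : measurableType d')
    (f : T -> U) (B : set U) :
  measurable_fun setT f -> measurable B -> measurable (f @^-1` B).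
Proof. by move=> mf mB; rewrite -[_ @^-1` _]setTI; exact: mf. Qed.

Lemma mutually_independent_pair d (T : measurableType d) (R : realType)
    (P : probability T R) (K : nat) (X : 'I_K -> {RV P >-> R}) (i j : 'I_K) :
  mutually_independent X -> i != j -> forall A B, measurable A -> measurable B ->
  P (X i @^-1` A `&` X j @^-1` B) = (P (X i @^-1` A) * P (X j @^-1` B))%E.
Proof.
move=> indep ij A B mA mB.
pose C l := if l == i then A else if l == j then B else setT.
have mC l : measurable (C l) by rewrite /C; case: ifP => //; case: ifP.
have -> : X i @^-1` A `&` X j @^-1` B = [set w | forall l, C l (X l w)].
  apply/seteqP; split => [w [Aw Bw] l|w CX]; rewrite /C.
    by case: ifP => [/eqP -> //|_]; case: ifP => [/eqP -> //|].
  split; first by have := CX i; rewrite /C eqxx.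
  by have := CX j; rewrite /C eq_sym (negbTE ij) eqxx.
rewrite indep // (bigD1 i) //= (bigD1 j) 1?eq_sym //= big1 ?mule1.
  by rewrite /C eqxx eq_sym (negbTE ij) eqxx.
move=> l /andP[li lj]; rewrite /C (negbTE li) (negbTE lj) preimage_setT.
exact: probability_setT.
Qed.

Section independent_difference.
Context d (T : measurableType d) (R : realType) (P : probability T R).
Variables (X Z : T -> R).
Hypotheses (mX : measurable_fun setT X) (mZ : measurable_fun setT Z).
Hypothesis XZ_indep : forall A B, measurable A -> measurable B ->
  P (X @^-1` A `&` Z @^-1` B) = (P (X @^-1` A) * P (Z @^-1` B))%E.
Hypothesis Z_itv_le : forall a b, a <= b -> (P (Z @^-1` `[a, b]) <= (b - a)%:E)%E.

(* Cut [0, +oo[ into the cells [n h, (n + 1) h[: on the n-th cell, X - Z lies in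
   [c, c + h] only if Z lies in an interval of length 2 h. *)
Lemma prob_nneg_subr_itv_le (c h : R) : 0 < h ->
  (P (X @^-1` `[0%R, +oo[ `&` (X \- Z)%R @^-1` `[c, (c + h)%R]) <= (2 * h)%:E)%E.
Proof.
move=> h0.
pose I (n : nat) := [set` `[n%:R * h, n.+1%:R * h[].
pose J (n : nat) := [set` `[n%:R * h - c - h, n.+1%:R * h - c]].
have mXI n : measurable (X @^-1` I n).
  exact: measurableT_preimage mX (measurable_itv _).
have mF n : measurable (X @^-1` I n `&` Z @^-1` J n).
  by apply: measurableI => //; exact: measurableT_preimage mZ (measurable_itv _).
apply: le_trans (measure_sigma_subadditive P mF _ _) _.
- apply: measurableI; first exact: measurableT_preimage mX (measurable_itv _).
  by apply: measurableT_preimage (measurable_itv _); exact: measurable_funB.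
- move=> w [/=]; rewrite in_itv /= andbT => X0.
  rewrite in_itv /= => /andP[XZ1 XZ2].
  have /andP[n1 n2] := truncn_itv (divr_ge0 X0 (ltW h0)).
  rewrite ler_pdivlMr // in n1; rewrite ltr_pdivrMr // in n2.
  exists (Num.truncn (X w / h)) => //.
  by split; rewrite /I /J /= in_itv /=; apply/andP; split; lra.
have PZJ n : (P (Z @^-1` J n) <= (2 * h)%:E)%E.
  have Jn : n%:R * h - c - h <= n.+1%:R * h - c.
    by rewrite -natr1 mulrDl mul1r; lra.
  by apply: le_trans (Z_itv_le Jn) _; rewrite lee_fin -natr1 mulrDl mul1r; lra.
apply: (@le_trans _ _ (\sum_(0 <= n <oo) ((2 * h)%:E * P (X @^-1` I n)))%E).
  apply: lee_nneseries => [n _ _|n _]; first exact: measure_ge0.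
  rewrite /= XZ_indep; try exact: measurable_itv.
  by rewrite [leRHS]muleC; apply: lee_wpmul2l; [exact: measure_ge0 | exact: PZJ].
rewrite nneseriesZl; last by move=> *; exact: measure_ge0.
rewrite -[leRHS]mule1; apply: lee_wpmul2l; first by rewrite lee_fin; lra.
have disjI : trivIset setT (fun n => X @^-1` I n).
  move=> n m _ _ [w [/=]]; rewrite /I /= !in_itv /= => /andP[a1 a2] /andP[b1 b2].
  have /ltnSE nm : (n < m.+1)%N by rewrite -(ltr_nat R) -(ltr_pM2r h0); lra.
  have /ltnSE mn : (m < n.+1)%N by rewrite -(ltr_nat R) -(ltr_pM2r h0); lra.
  by apply/eqP; rewrite eqn_leq nm mn.
have mU : measurable (\bigcup_n X @^-1` I n) by exact: bigcup_measurable.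
by rewrite -measure_semi_bigcup // probability_le1.
Qed.

End independent_difference.

Lemma prob_subr_itv_le d (T : measurableType d) (R : realType)
    (P : probability T R) (X Z : T -> R) :
  measurable_fun setT X -> measurable_fun setT Z ->
  (forall A B, measurable A -> measurable B ->
    P (X @^-1` A `&` Z @^-1` B) = (P (X @^-1` A) * P (Z @^-1` B))%E) ->
  (forall a b, a <= b -> (P (Z @^-1` `[a, b]) <= (b - a)%:E)%E) ->
  forall c h : R, 0 < h -> (P ((X \- Z)%R @^-1` `[c, (c + h)%R]) <= (4 * h)%:E)%E.
Proof.
move=> mX mZ XZ_indep Z_itv_le c h h0.
pose NX w := - X w; pose NZ w := - Z w.
have mNX : measurable_fun setT NX by exact: measurableT_comp.
have mNZ : measurable_fun setT NZ by exact: measurableT_comp.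
have mN A : measurable A -> measurable [set x : R | A (- x)].
  by move=> mA; have := oppr_measurable measurableT mA; rewrite setTI.
have NZ_itv_le a b : a <= b -> (P (NZ @^-1` `[a, b]) <= (b - a)%:E)%E.
  move=> ab; have -> : NZ @^-1` `[a, b] = Z @^-1` `[- b, - a].
    by apply/seteqP; split => w; rewrite /NZ /= !in_itv /= => /andP[? ?];
      apply/andP; split; lra.
  have ba : - b <= - a by rewrite lerN2.
  by apply: le_trans (Z_itv_le _ _ ba) _; rewrite lee_fin opprK addrC.
have NXZ_indep A B : measurable A -> measurable B ->
    P (NX @^-1` A `&` NZ @^-1` B) = (P (NX @^-1` A) * P (NZ @^-1` B))%E.
  by move=> mA mB; exact: (XZ_indep _ _ (mN _ mA) (mN _ mB)).
(* Where [X < 0], the difference [(- X) - (- Z)] lies in [[- c - h, - c]]. *)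
have pos := prob_nneg_subr_itv_le mX mZ XZ_indep Z_itv_le c h0.
have neg := prob_nneg_subr_itv_le mNX mNZ NXZ_indep NZ_itv_le (- c - h) h0.
pose S (f g : T -> R) (b : R) :=
  f @^-1` `[0%R, +oo[ `&` (f \- g)%R @^-1` `[b, (b + h)%R].
have mS (f g : T -> R) b :
    measurable_fun setT f -> measurable_fun setT g -> measurable (S f g b).
  move=> mf mg; apply: measurableI.
    exact: measurableT_preimage mf (measurable_itv _).
  by apply: measurableT_preimage (measurable_itv _); exact: measurable_funB.
have mXZ : measurable ((X \- Z)%R @^-1` `[c, (c + h)%R]).
  by apply: measurableT_preimage (measurable_itv _); exact: measurable_funB.
apply: (@le_trans _ _ (P (S X Z c `|` S NX NZ (- c - h)))).
  apply: le_measure; rewrite ?inE; first exact: mXZ.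
    by apply: measurableU; exact: mS.
  move=> w /=; rewrite !in_itv /= => /andP[XZ1 XZ2].
  have [X0|X0] := leP 0 (X w); [left|right]; rewrite /S /NX /NZ /= !in_itv /=.
    by rewrite X0 XZ1 XZ2.
  by rewrite andbT; split; [lra | apply/andP; split; lra].
apply: le_trans (measureU2 _ (mS _ _ _ mX mZ) (mS _ _ _ mNX mNZ)) _.
have -> : (4 * h)%:E = ((2 * h)%:E + (2 * h)%:E)%E.
  by rewrite -EFinD; congr (_%:E); lra.
exact: leeD pos neg.
Qed.

Lemma exists_ord_neq (K : nat) (k : 'I_K) : (1 < K)%N -> exists j : 'I_K, j != k.
Proof.
case: K k => [|[|K]] // k _.
by have [->|k0] := eqVneq k ord0; [exists ord_max | exists ord0; rewrite eq_sym].
Qed.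

Section max_off.
Variables (R : realType) (K : nat) (k : 'I_K).
Hypothesis off_k : exists j : 'I_K, j != k.

(* The default value of the big max is itself an off-[k] entry. *)
Lemma max_off_attain (v : 'I_K -> R) : exists2 j, j != k & max_off k v = v j.
Proof.
rewrite /max_off; case: pickP => [j0 /= j0k|none]; last first.
  by case: off_k => j; rewrite none.
apply: (big_ind (fun y => exists2 j, j != k & y = v j)).
- by exists j0.
- move=> x y [i ik ->] [j jk ->].
  by rewrite maxElt; case: ifP => _; [exists j | exists i].
- by move=> j jk; exists j.
Qed.

Lemma max_off_ge (v : 'I_K -> R) j : j != k -> v j <= max_off k v.
Proof.
move=> jk; rewrite /max_off; case: pickP => [j0 _|/(_ j)]; last by rewrite jk.
exact: le_bigmax_cond.
Qed.

Lemma max_off_ltP (v : 'I_K -> R) m :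
  max_off k v < m <-> forall j, j != k -> v j < m.
Proof.
split => [vm j jk|vm]; first exact: le_lt_trans (max_off_ge v jk) vm.
by have [j jk ->] := max_off_attain v; exact: vm.
Qed.

End max_off.

Lemma measurable_max_off d (T : measurableType d) (R : realType) (K : nat)
    (k : 'I_K) (X : 'I_K -> T -> R) :
  (forall j, measurable_fun setT (X j)) ->
  measurable_fun setT (fun w => max_off k (fun j => X j w)).
Proof.
move=> mX; rewrite /max_off; case: pickP => [j0 _|_]; last exact: measurable_cst.
have -> : (fun w => \big[Num.max/X j0 w]_(j | j != k) X j w) =
          \big[(fun f g => f \max g)/X j0]_(j | j != k) X j.
  by apply/funext => w; elim/big_rec2: _ => // j y f _ ->.
by apply: big_ind => // f g; exact: measurable_maxr.
Qed.

Lemma measurable_Yvar d (T : measurableType d) (R : realType) (P : probability T R)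
    (K : nat) (k : 'I_K) (eps : 'I_K -> {RV P >-> R}) :
  measurable_fun setT (Yvar k eps).
Proof.
apply: measurable_funB; last exact: measurable_funPT.
by apply: measurable_max_off => j; exact: measurable_funPT.
Qed.

HB.instance Definition _ d (T : measurableType d) (R : realType)
    (P : probability T R) (K : nat) (k : 'I_K) (eps : 'I_K -> {RV P >-> R}) :=
  isMeasurableFun.Build _ _ _ _ (Yvar k eps) (measurable_Yvar k eps).

Section cdfY.
Context d (T : measurableType d) (R : realType) (P : probability T R).
Variables (K : nat) (k : 'I_K) (eps : 'I_K -> {RV P >-> R}).
Hypothesis heps : std_gaussian_vector eps.
Hypothesis off_k : exists j : 'I_K, j != k.

Local Notation Y := (Yvar k eps).
Local Notation F := (cdfY k eps).

Let mY (B : set R) : measurable B -> measurable (Y @^-1` B).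
Proof. exact: measurable_funPTI. Qed.

Let mY_le t : measurable [set w | Y w <= t].
Proof. exact: (mY (measurable_itv `]-oo, t])). Qed.

Let mY_lt t : measurable [set w | Y w < t].
Proof. exact: (mY (measurable_itv `]-oo, t[)). Qed.

Lemma cdfYE t : P [set w | Y w <= t] = (F t)%:E.
Proof. by rewrite /cdfY fineK // fin_num_measure. Qed.

Lemma prob_eps_itv_le j (a b : R) : a <= b ->
  (P (eps j @^-1` `[a, b]) <= (b - a)%:E)%E.
Proof.
by move=> ab; rewrite [P _](heps.2 j _ (measurable_itv _)) normal_prob1_itv_le.
Qed.

Lemma prob_Yvar_itv_le (c h : R) : 0 < h ->
  (P (Y @^-1` `[c, (c + h)%R]) <= (4 *+ K * h)%:E)%E.
Proof.
move=> h0.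
pose S (n : nat) : set T := if insub n is Some j then
  if j == k then set0 else (eps j \- eps k)%R @^-1` `[c, (c + h)%R] else set0.
have mS n : measurable (S n).
  rewrite /S; case: insubP => [j _ _|_] //; case: ifP => // _.
  by apply: measurableT_preimage (measurable_itv _); apply: measurable_funB.
have PS n : (P (S n) <= (4 * h)%:E)%E.
  have P0 : (P set0 <= (4 * h)%:E)%E by rewrite measure0 lee_fin; lra.
  rewrite /S; case: insubP => [j _ _|_] //; case: ifP => [//|jk].
  apply: (prob_subr_itv_le (measurable_funPT _) (measurable_funPT _) _
    (@prob_eps_itv_le k) _ h0).
  by apply: mutually_independent_pair heps.1 _; rewrite jk.
have cover : Y @^-1` `[c, (c + h)%R] `<=` \big[setU/set0]_(i < K) S i.
  move=> w /=; rewrite in_itv /= => /andP[cY Yh].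
  have [j jk Yj] := max_off_attain off_k (fun j => eps j w).
  rewrite -bigcup_mkord; exists j; first exact: ltn_ord.
  rewrite /Yvar Yj in cY Yh.
  by rewrite /S valK (negbTE jk) /= in_itv /= cY Yh.
apply: (@le_trans _ _ (P (\big[setU/set0]_(i < K) S i))).
  by apply: le_measure cover; rewrite inE; [exact: mY | exact: bigsetU_measurable].
apply: le_trans (Boole_inequality P (fun i _ => mS i)) _.
apply: (@le_trans _ _ (\sum_(i < K) (4 * h)%:E)%E).
  by apply: lee_sum => i _; exact: PS.
by rewrite sumEFin sumr_const card_ord -mulrnAl.
Qed.

Lemma cdfY_le s t : s <= t -> F s <= F t.
Proof.
move=> st; rewrite -lee_fin -!cdfYE.
by apply: le_measure; rewrite ?inE // => w /= /le_trans; apply.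
Qed.

Lemma cdfY_le_add s t : s <= t -> F t <= F s + 4 *+ K * (t - s).
Proof.
rewrite le_eqVlt => /predU1P[->|st]; first by rewrite subrr mulr0 addr0.
have h0 : 0 < t - s by rewrite subr_gt0.
rewrite -lee_fin EFinD -!cdfYE.
apply: le_trans (leeD (lexx _) (prob_Yvar_itv_le s h0)).
apply: le_trans (measureU2 _ (mY_le s) (mY (measurable_itv _))).
apply: le_measure; rewrite ?inE; first exact: mY_le.
  exact: measurableU (mY_le s) (mY (measurable_itv _)).
move=> w /= Yt; have [Ys|Ys] := leP (Y w) s; [left|right] => //.
by rewrite /= in_itv /= (ltW Ys) addrC subrK.
Qed.

Lemma cdfY_lipschitz s t : `|F t - F s| <= 4 *+ K * `|t - s|.
Proof.
wlog st : s t / s <= t.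
  by move=> H; have [/H//|/ltW/H] := leP s t; rewrite distrC (distrC t).
rewrite !ger0_norm ?subr_ge0 ?cdfY_le // lerBlDl.
exact: cdfY_le_add.
Qed.

Let C_gt0 : 0 < 4 *+ K :> R.
Proof.
by case: off_k => j _; rewrite mulrn_wgt0 // (leq_ltn_trans _ (ltn_ord j)).
Qed.

Lemma continuous_cdfY : continuous F.
Proof.
move=> x; apply/cvgrPdist_le => e e0; apply/nbhs_normP.
exists (e / (4 *+ K)) => /=; first exact: divr_gt0 e0 C_gt0.
move=> y /= xy; apply: le_trans (cdfY_lipschitz _ _) _.
by rewrite mulrC -ler_pdivlMr // ltW.
Qed.

Lemma prob_Yvar_lt t : P [set w | Y w < t] = (F t)%:E.
Proof.
have fin : P [set w | Y w < t] \is a fin_num by rewrite fin_num_measure.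
rewrite -(fineK fin); congr (_%:E); apply/le_anti/andP; split.
  rewrite -lee_fin -cdfYE (fineK fin).
  by apply: le_measure; rewrite ?inE // => w /= /ltW.
apply/ler_addgt0Pr => e e0.
have h0 : 0 < e / (4 *+ K) := divr_gt0 e0 C_gt0.
rewrite -lee_fin EFinD -cdfYE (fineK fin).
have -> : e = 4 *+ K * (e / (4 *+ K)) by rewrite mulrC divfK ?gt_eqF.
apply: le_trans (leeD (lexx _) (prob_Yvar_itv_le t h0)).
apply: le_trans (measureU2 _ (mY_lt t) (mY (measurable_itv _))).
apply: le_measure; rewrite ?inE; first exact: mY_le.
  exact: measurableU (mY_lt t) (mY (measurable_itv _)).
move=> w /= Yt; have [Ys|Ys] := ltP (Y w) t; [left|right] => //.
by rewrite /= in_itv /= Ys (le_trans Yt) // lerDl ltW.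
Qed.

(* With positive probability, [eps_k] is near [0] and every other [eps_j] is near
   the midpoint of [s, t], which puts [Y] in ]s, t]. *)
Lemma cdfY_lt s t : s < t -> F s < F t.
Proof.
move=> st; pose m := (s + t) / 2; pose r := (t - s) / 4.
have r0 : 0 < r by rewrite divr_gt0 // subr_gt0.
pose box (j : 'I_K) : set R :=
  if j == k then `]- r, r[%classic else `]m - r, m + r[%classic.
have mbox j : measurable (box j) by rewrite /box; case: ifP.
pose B := [set w | forall j, box j (eps j w)].
have mB : measurable B.
  rewrite (_ : B = \bigcap_(j in [set: 'I_K]) eps j @^-1` box j).
    by apply: fin_bigcap_measurable => // j _; exact: measurable_funPTI.
  by apply/seteqP; split => [w Bw j _|w Bw j]; exact: Bw.
have PB0 : (0 < P B)%E.
  rewrite heps.1 //; apply: (big_ind (fun x => 0 < x)%E) => //.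
    exact: mule_gt0.
  move=> j _; rewrite [P _](heps.2 j _ (mbox j)) /box.
  by case: ifP => _; apply: normal_prob01_itv_gt0; lra.
have YB w : B w -> s < Y w <= t.
  move=> Bw; have [j jk Yj] := max_off_attain off_k (fun j => eps j w).
  have := Bw k; have := Bw j; rewrite /box eqxx (negbTE jk) /= !in_itv /=.
  move=> /andP[j1 j2] /andP[k1 k2]; rewrite /Yvar Yj.
  by rewrite /m /r in j1 j2 k1 k2; apply/andP; split; lra.
have disj : [set w | Y w <= s] `&` B = set0.
  by apply/seteqP; split => // w [/= + /YB /andP[sY _]]; rewrite leNgt sY.
have : (P [set w | (Y w <= s)%R] + P B <= P [set w | (Y w <= t)%R])%E.
  rewrite -measureU //; apply: le_measure; rewrite ?inE //.
    exact: measurableU.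
  by move=> w [/= Ys | /YB /andP[_ //]]; exact: le_trans (ltW st).
rewrite -lte_fin -!cdfYE; apply: lt_le_trans.
by rewrite lteDl // fin_num_measure.
Qed.

Lemma cdfY_surj g : 0 < g -> g < 1 -> exists t, F t = g.
Proof.
move=> g0 g1.
(* [F x] unfolds to [fine (cdf Y x)], so the limits of [cdf] transfer to [F]. *)
have cdf_pinfty : cdf (P := P) Y x @[x --> +oo] --> (1 : R)%:E := cvg_cdfy1 _.
have cdf_ninfty : cdf (P := P) Y x @[x --> -oo] --> (0 : R)%:E := cvg_cdfNy0 _.
have [M2 [_ HM2]] := cvgr_gt _ (fine_cvg cdf_pinfty) _ g1.
have [M1 [_ HM1]] := cvgr_lt _ (fine_cvg cdf_ninfty) _ g0.
have F2 : g < F (M2 + 1) by apply: HM2; rewrite ltrDl.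
have F1 : F (M1 - 1) < g by apply: HM1; rewrite ltrBlDr ltrDl.
have M12 : M1 - 1 <= M2 + 1.
  by rewrite leNgt; apply/negP => /ltW /cdfY_le; lra.
have bnd : Num.min (F (M1 - 1)) (F (M2 + 1)) <= g <=
    Num.max (F (M1 - 1)) (F (M2 + 1)).
  by rewrite ge_min le_max (ltW F1) (ltW F2) orbT.
have [t _ Ft] := IVT M12 (continuous_subspaceT continuous_cdfY) bnd.
by exists t.
Qed.

Lemma wvec_entry a s w j :
  wvec k eps a s w j 0 = a * (j == k)%:R + s * eps j w.
Proof. by rewrite !mxE. Qed.

Lemma zvec_x0P (hk : (k < K.-1)%N) a s w : 0 < s ->
  zvec k eps a s w = stdbasis R K k <-> Y w < a / s.
Proof.
move=> s0; rewrite /zvec /Yvar ltrBlDr.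
have mask_neq_x0 : stdbasis R K K.-1 <> stdbasis R K k.
  move/(congr1 (fun M : 'cV[R]_K => M k 0)); rewrite !mxE eqxx (ltn_eqF hk).
  by move/eqP; rewrite eq_sym oner_eq0.
have w_off j : j != k -> (wvec k eps a s w j 0 < wvec k eps a s w k 0) =
    (eps j w < a / s + eps k w).
  move=> jk; rewrite !wvec_entry (negbTE jk) eqxx mulr0 mulr1 add0r.
  by rewrite -[RHS](ltr_pM2l s0) mulrDr mulrCA mulfV ?gt_eqF // mulr1.
have -> : (max_off k (fun j => wvec k eps a s w j 0) < wvec k eps a s w k 0) =
    (max_off k (fun j => eps j w) < a / s + eps k w).
  by apply/idP/idP => /(max_off_ltP off_k) H; apply/(max_off_ltP off_k) => j jk;
    [rewrite -w_off | rewrite w_off] => //; exact: H.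
by case: ifP => _; split => // /mask_neq_x0.
Qed.

Lemma prob_zvec_x0 (hk : (k < K.-1)%N) a s : 0 < s ->
  P [set w | zvec k eps a s w = stdbasis R K k] = (F (a / s))%:E.
Proof.
move=> s0; rewrite -prob_Yvar_lt; congr (P _).
by apply/seteqP; split => w /(zvec_x0P hk _ _ s0).
Qed.

End cdfY.

Lemma unit_circle_ratio (R : rcfType) (t : R) :
  exists a s : R, [/\ 0 < s, a ^+ 2 + s ^+ 2 = 1 & a / s = t].
Proof.
pose r := Num.sqrt (1 + t ^+ 2).
have t1 : 0 < 1 + t ^+ 2 by rewrite ltr_pwDl ?sqr_ge0.
have r0 : 0 < r by rewrite sqrtr_gt0.
have r2 : r ^+ 2 = 1 + t ^+ 2 by rewrite sqr_sqrtr // ltW.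
exists (t / r), r^-1; split; first by rewrite invr_gt0.
  rewrite expr_div_n exprVn -[X in _ + X]mul1r -mulrDl addrC -r2.
  by rewrite divff // expf_neq0 // gt_eqF.
by rewrite invrK divfK // gt_eqF.
Qed.

Theorem lemma3p1 (R : realType) (d : measure_display) (T : measurableType d)
  (P : probability T R) (K : nat) (hK : (2 <= K)%N) (k : 'I_K)
  (hk : (k < K.-1)%N) (eps : 'I_K -> {RV P >-> R})
  (heps : std_gaussian_vector eps) (gamma : R) (hg0 : 0 < gamma)
  (hg1 : gamma < 1) :
  (* F_Y^{-1}(gamma) is well defined: a unique t with F_Y(t) = gamma *)
  (exists! t : R, cdfY k eps t = gamma) /\
  (* any pair with alpha/sigma = F_Y^{-1}(gamma) works *)
  (forall a s : R, 0 < s -> a ^+ 2 + s ^+ 2 = 1 ->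
     cdfY k eps (a / s) = gamma ->
     P [set w | zvec k eps a s w = stdbasis R K k] = gamma%:E) /\
  (* and such a pair exists *)
  (exists a s : R, [/\ 0 < s, a ^+ 2 + s ^+ 2 = 1,
     cdfY k eps (a / s) = gamma &
     P [set w | zvec k eps a s w = stdbasis R K k] = gamma%:E]).
Proof.
have off_k := exists_ord_neq k hK.
have [t Ft] := cdfY_surj heps off_k hg0 hg1.
split; [|split].
- exists t; split => // t' Ft'.
  by apply: (inc_inj (le_mono (cdfY_lt heps off_k))); rewrite Ft Ft'.
- by move=> a s s0 _ <-; exact: prob_zvec_x0.
- have [a [s [s0 as1 ast]]] := unit_circle_ratio t.
  by exists a, s; rewrite (prob_zvec_x0 heps off_k) // ast Ft.
Qed.
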